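(* The Sierpiński gasket iterated graph system and the pentagonal Sierpiński carpet iterated graph system are of bounded geometry.
   Context: Graphs: $(V,E)$, $V$ finite non-empty, $E\subseteq V\times V$, $(x,y)\in E\Rightarrow(y,x)\notin E$; $\{x,y\}\in E$ means either orientation; a path is a sequence $[x_1,\dots,x_k]$ ($k\ge1$) with $\{x_i,x_{i+1}\}\in E$, of length $k-1$; $d_G$ is the path metric. An iterated graph system $\mathfrak R$ consists of a connected graph $G_1=(S,E)$, a finite set $\mathcal T$ of types, a surjective typing $\mathfrak t:E\to\mathcal T$ and non-empty gluing rules $I_t\subseteq S\times S$. With $W_m=S^m$, $W_\#=\bigcup_{m\ge1}W_m$, $[w]_k=w_1\cdots w_k$, the replacement graphs $G_m=(W_m,E_m)$ are defined recursively: $(w,v)\in E_{m+1}$ iff either (1) $[w]_m=[v]_m$ and $(w_{m+1},v_{m+1})\in E$ (type $\mathfrak t(w_{m+1},v_{m+1})$), or (2) $([w]_m,[v]_m)\in E_m$ and $(w_{m+1},v_{m+1})\in I_{\mathfrak t([w]_m,[v]_m)}$ (type $\mathfrak t([w]_m,[v]_m)$). For $n\ge k$, $\pi_{n,k}$ maps a path of $G_n$ to the path of $G_k$ obtained by replacing each vertex $w$ by $[w]_k$ and deleting consecutive repetitions. A path $\theta$ in $G_m$ is an intersection path if there are paths $\theta_n$ in $G_n$ ($n\in\mathbb N$) with $\theta_m=\theta$, $\pi_{n,k}(\theta_n)=\theta_k$ for all $n>k$, and $\lim_n\operatorname{len}(\theta_n)<\infty$. $\mathcal N(w)=\{v\in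 W_{|w|}:$ there is an intersection path from $w$ to $v\}$; $\mathfrak R$ is of bounded geometry if $\sup_{w\in W_\#}\operatorname{diam}_{d_{G_{|w|}}}(\mathcal N(w))<\infty$. Sierpiński gasket: $S=\{0,1,2\}$, $E=\{(0,1),(1,2),(0,2)\}$ of types $a,b,c$ respectively, $I_a=\{(1,0)\}$, $I_b=\{(2,1)\}$, $I_c=\{(2,0)\}$. Pentagonal Sierpiński carpet: $S=\{0,1,2,3,4\}$, $E=\{(0,1),(1,2),(2,3),(3,4),(4,0)\}$ of types $a,b,c,d,e$ respectively, $I_a=\{(1,0),(2,4)\}$, $I_b=\{(2,1),(3,0)\}$, $I_c=\{(3,2),(4,1)\}$, $I_d=\{(4,3),(0,2)\}$, $I_e=\{(0,4),(1,3)\}$. *)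

From mathcomp Require Import all_boot.
Set Implicit Arguments. Unset Strict Implicit. Unset Printing Implicit Defensive.

(* An iterated graph system is given by a finite vertex set S, a finite set of
   types T, a directed edge relation E on S, a typing ty (only its values on
   edges of E matter) and gluing rules I t (a relation on S for each type t).
   Words of W_m are sequences over S of size m; [w]_k = take k w. *)
Section IGS.
Variables (S T : finType) (E : rel S) (ty : S -> S -> T) (I : T -> rel S).

Definition is_igs : Prop :=
  [/\ (forall x y, E x y -> ~~ E y x),
      (forall x y, connect (fun a b => E a b || E b a) x y),
      (forall t, exists x y, E x y && (ty x y == t))
    & (forall t, exists x y, I t x y)].

(* etype m w v = Some t iff (w,v) is an edge of E_m (w, v of size m) of type t.
   E_0 is empty, so E_1 consists of the edges of case (1), i.e. a copy of E. *)
Fixpoint etype (m : nat) (w v : seq S) : option T :=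
  match m with
  | 0 => None
  | m'.+1 =>
    match drop m' w, drop m' v with
    | [:: a], [:: b] =>
      if take m' w == take m' v then (if E a b then Some (ty a b) else None)
      else match etype m' (take m' w) (take m' v) with
           | Some t => if I t a b then Some t else None
           | None => None
           end
    | _, _ => None
    end
  end.

Definition edge (m : nat) (w v : seq S) : bool := etype m w v != None.

Definition adj (m : nat) (w v : seq S) : bool := edge m w v || edge m v w.

Definition is_path (m : nat) (p : seq (seq S)) : bool :=
  if p is x :: q then all (fun u => size u == m) p && path (adj m) x q
  else false.

Definition plen (p : seq (seq S)) : nat := (size p).-1.

Fixpoint compress (s : seq (seq S)) : seq (seq S) :=
  match s with
  | x :: ((y :: _) as t) => if x == y then compress t else x :: compress t
  | _ => s
  end.

Definition proj (k : nat) (p : seq (seq S)) : seq (seq S) :=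
  compress (map (take k) p).

(* theta is an intersection path in G_m; lim_n len(theta_n) < oo is stated as
   convergence of the nat-valued sequence to a finite value, i.e. eventual
   constancy *)
Definition is_intersection_path (m : nat) (theta : seq (seq S)) : Prop :=
  0 < m /\
  exists th : nat -> seq (seq S),
    [/\ th m = theta,
        (forall n, 0 < n -> is_path n (th n)),
        (forall n k, 0 < k -> k < n -> proj k (th n) = th k)
      & exists L N, forall n, N <= n -> plen (th n) = L].

Definition in_nbhd (w v : seq S) : Prop :=
  exists q, is_intersection_path (size w) (w :: q) /\ last w q = v.

Definition dist_le (m : nat) (x y : seq S) (D : nat) : Prop :=
  exists q, is_path m (x :: q) /\ last x q = y /\ size q <= D.

Definition bounded_geometry : Prop :=
  exists D : nat, forall w : seq S, 0 < size w ->
    forall v1 v2, in_nbhd w v1 -> in_nbhd w v2 -> dist_le (size w) v1 v2 D.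

End IGS.

(* ---------- Sierpinski gasket: S = {0,1,2}, types a,b,c = 0,1,2 ---------- *)
Definition gasketE (x y : 'I_3) : bool :=
  ((x : nat), (y : nat)) \in [:: (0, 1); (1, 2); (0, 2)].
Definition gasketTy (x y : 'I_3) : 'I_3 :=
  if ((x : nat), (y : nat)) == (0, 1) then @Ordinal 3 0 isT
  else if ((x : nat), (y : nat)) == (1, 2) then @Ordinal 3 1 isT
  else @Ordinal 3 2 isT.
Definition gasketI (t : 'I_3) (x y : 'I_3) : bool :=
  ((x : nat), (y : nat)) \in nth [::] [:: [:: (1, 0)]; [:: (2, 1)]; [:: (2, 0)]] t.

(* ---------- pentagonal Sierpinski carpet: S = {0,..,4}, types a..e = 0..4 -- *)
Definition carpetE (x y : 'I_5) : bool :=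
  ((x : nat), (y : nat)) \in [:: (0, 1); (1, 2); (2, 3); (3, 4); (4, 0)].
(* the edge (i, i+1 mod 5) has type i *)
Definition carpetTy (x y : 'I_5) : 'I_5 := x.
Definition carpetI (t : 'I_5) (x y : 'I_5) : bool :=
  ((x : nat), (y : nat)) \in
    nth [::] [:: [:: (1, 0); (2, 4)]; [:: (2, 1); (3, 0)]; [:: (3, 2); (4, 1)];
                 [:: (4, 3); (0, 2)]; [:: (0, 4); (1, 3)]] t.

From mathcomp Require Import all_boot zify.
Set Implicit Arguments. Unset Strict Implicit. Unset Printing Implicit Defensive.

(* Let v be in N(w), witnessed by lifts th_n of an intersection path, and let N be
   so large that the lengths of th_N and th_(N+1) agree.  Then projecting th_(N+1)
   onto G_N deletes no vertex, so every edge of th_(N+1) joins two distinct N-cells: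
   th_(N+1) is a walk of gluing edges of G_(N+1).  Any walk of three gluing edges can
   be shortcut to at most two with the same ends, by induction on the level: a walk
   starting at a vertex of the form x j j stays on such vertices and descends one
   level, and any other walk stays in the two cells joined by its first crossing,
   where it is a walk of a finite automaton built from G_1 and the gluing rules.
   Hence the N-prefixes of the ends of th_(N+1) are at distance at most 2, so are
   w and v, and N(w) has diameter at most 4.  The induction only needs finitely many
   properties of G_1 and of the gluing rules, which are decided by evaluation for
   the gasket and the pentagonal carpet. *)

Section ShortWalks.
Variables (A : eqType) (R : rel A).

Definition within2 x y : Prop := [\/ x = y, R x y | exists2 z, R x z & R z y].

Definition shortcut_at x : Prop :=
  forall y1 y2 y3, R x y1 -> R y1 y2 -> R y2 y3 -> within2 x y3.

Lemma within2_last x p : (forall y, shortcut_at y) -> path R x p -> within2 x (last x p).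
Proof.
move=> short; elim: p x => [|y p IHp] x /=; first by move=> _; constructor.
case/andP=> Rxy /IHp[<-|Ryz|[z Ryz Rzw]]; first by constructor 2.
  by constructor 3; exists y.
exact: short Rxy Ryz Rzw.
Qed.

Definition within2b (s : seq A) x y := [|| x == y, R x y | has (fun z => R x z && R z y) s].

Definition shortcut_atb (s : seq A) x :=
  all (fun y1 => all (fun y2 => all (within2b s x) (filter (R y2) s)) (filter (R y1) s))
    (filter (R x) s).

Lemma shortcut_atP s x : (forall y, y \in s) -> shortcut_atb s x -> shortcut_at x.
Proof.
move=> s_full chk y1 y2 y3 R1 R2 R3.
have mem_R u v : R u v -> v \in filter (R u) s by rewrite mem_filter s_full andbT.
move/allP/(_ _ (mem_R _ _ R1))/allP/(_ _ (mem_R _ _ R2))/allP/(_ _ (mem_R _ _ R3)): chk.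
case/or3P=> [/eqP ->|Rxy|/hasP[z _ /andP[Rxz Rzy]]]; first by constructor 1.
  by constructor 2.
by constructor 3; exists z.
Qed.

End ShortWalks.

Lemma eq_shortcut_at (A : eqType) (R R' : rel A) x :
  R =2 R' -> shortcut_at R x -> shortcut_at R' x.
Proof.
move=> eqR short y1 y2 y3; rewrite -!eqR => R1 R2 R3.
by case: (short _ _ _ R1 R2 R3) => [->|Rxy|[z Rxz Rzy]];
  [constructor 1 | constructor 2; rewrite -eqR | constructor 3; exists z; rewrite -eqR].
Qed.

Lemma within2_homo (A B : eqType) (R : rel A) (R' : rel B) (f : A -> B) x y :
  {homo f : u v / R u v >-> R' u v} -> within2 R x y -> within2 R' (f x) (f y).
Proof.
move=> homo [->|Rxy|[z Rxz Rzy]]; first by constructor 1.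
  by constructor 2; apply: homo.
by constructor 3; exists (f z); apply: homo.
Qed.

Section Compress.
Variable S : finType.

Lemma compress_cons2 (x y : seq S) t :
  compress (x :: y :: t) = if x == y then compress (y :: t) else x :: compress (y :: t).
Proof. by []. Qed.

Lemma size_compress (s : seq (seq S)) : size (compress s) <= size s.
Proof.
elim: s => [|x [|y t] IH] //; rewrite compress_cons2.
by case: ifP => _; [apply: leqW | rewrite /= ltnS].
Qed.

Lemma compress_sorted (s : seq (seq S)) :
  size (compress s) = size s -> sorted (fun a b => a != b) s.
Proof.
elim: s => [|x [|y t] IH] //; rewrite compress_cons2; case: eqP => [->|/eqP xy] eq.
  by have := size_compress (y :: t); rewrite eq ltnn.
by case: eq => /IH /= ->; rewrite xy.
Qed.

Lemma compress_cons (x : seq S) s :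
  exists2 s', compress (x :: s) = x :: s' & last x s' = last x s.
Proof.
elim: s x => [|y t IH] x; first by exists [::].
have [s' e l] := IH y; rewrite compress_cons2 e; case: eqP => [xy|_]; first by subst y; exists s'.
by exists (y :: s').
Qed.

End Compress.

Section Gluing.
Variables (S T : finType) (E : rel S) (ty : S -> S -> T) (I : T -> rel S).
Local Notation etype := (etype E ty I).
Local Notation adj := (adj E ty I).

Lemma rcons_of_size n (w : seq S) :
  size w = n.+1 -> exists x a, w = rcons x a /\ size x = n.
Proof. by case/lastP: w => [//|x a]; rewrite size_rcons => -[]; exists x, a. Qed.

Lemma etype_size n w v t : etype n w v = Some t -> size w = n /\ size v = n.
Proof.
case: n => [//|n] /=.
case Dw: (drop n w) => [|a [|]] //; case Dv: (drop n v) => [|b [|]] // _.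
by move: (congr1 size Dw) (congr1 size Dv); rewrite !size_drop /=; lia.
Qed.

Lemma etype_rcons n x y a b : size x = n -> size y = n ->
  etype n.+1 (rcons x a) (rcons y b) =
  if x == y then (if E a b then Some (ty a b) else None)
  else if etype n x y is Some t then (if I t a b then Some t else None) else None.
Proof.
move=> <- y_n /=; rewrite -!cats1 drop_size_cat // take_size_cat //.
by rewrite -y_n drop_size_cat // take_size_cat.
Qed.

(* A port [(t, true)] follows edges of type [t] forwards, [(t, false)] backwards. *)
Definition port := (T * bool)%type.

Definition flip (P : port) : port := (P.1, ~~ P.2).

Definition glue (P : port) a b := if P.2 then I P.1 a b else I P.1 b a.

Definition port_edge n x (P : port) y :=
  if P.2 then etype n x y == Some P.1 else etype n y x == Some P.1.

Definition cell_edge j (P : port) k :=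
  if P.2 then E j k && (ty j k == P.1) else E k j && (ty k j == P.1).

(* [a] is a vertex of a cell at which edges glued along [P] attach. *)
Definition gate (P : port) a := [exists b, glue P a b].

Definition cell_step j c k d := [exists P, cell_edge j P k && glue P c d].

(* [(x, c)] stands for the vertex [x c] of [G_(n+1)], and [glue_step n] relates the
   ends of the edges of [G_(n+1)] built by the second rule, which join distinct
   [n]-cells. *)
Definition glue_step n (s s' : seq S * S) :=
  [exists P, port_edge n s.1 P s'.1 && glue P s.2 s'.2].

Lemma port_edge_flip n x P y : port_edge n x P y = port_edge n y (flip P) x.
Proof. by case: P => t []. Qed.

Lemma glue_flip P a b : glue P a b = glue (flip P) b a.
Proof. by case: P => t []. Qed.

Lemma gate_glue P a b : glue P a b -> gate P a.
Proof. by move=> ab; apply/existsP; exists b. Qed.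

Lemma port_edge0 x P y : port_edge 0 x P y = false.
Proof. by case: P => t []. Qed.

Lemma port_edge_size n x P y : port_edge n x P y -> size x = n /\ size y = n.
Proof. by rewrite /port_edge; case: ifP => _ /eqP/etype_size // []. Qed.

Lemma glue_step_size n s s' : glue_step n s s' -> size s.1 = n /\ size s'.1 = n.
Proof. by case/existsP=> P /andP[/port_edge_size]. Qed.

Lemma port_edge_rcons n x y j k P : size x = n -> size y = n ->
  port_edge n.+1 (rcons x j) P (rcons y k) =
  if x == y then cell_edge j P k else port_edge n x P y && glue P j k.
Proof.
move=> x_n y_n; rewrite /port_edge /cell_edge /glue !etype_rcons // (eq_sym y).
case: P => t [] /=; case: (x == y).
all: first [by case: (E _ _) | case: (etype n _ _) => [t'|] //=].
all: case: (t' =P t) => [->|/eqP ne];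
  last have /negbTE ne' : Some t' != Some t by apply: contra ne => /eqP[->].
all: by case: (I _ _ _); rewrite ?andbT ?andbF ?ne'.
Qed.

Lemma glue_step_rcons n x y j k c d : size x = n -> size y = n ->
  glue_step n.+1 (rcons x j, c) (rcons y k, d) =
  if x == y then cell_step j c k d
  else [exists P, [&& port_edge n x P y, glue P j k & glue P c d]].
Proof.
move=> x_n y_n; rewrite /glue_step /cell_step /=.
by case: ifP => xy; apply: eq_existsb => P; rewrite port_edge_rcons // xy ?andbA.
Qed.

Lemma adj_size n w v : adj n w v -> size w = n /\ size v = n.
Proof.
by case/orP; rewrite /edge; case E1: (etype _ _ _) => [t|] // _; case: (etype_size E1).
Qed.

Lemma take_rcons_size n (x : seq S) a : size x = n -> take n (rcons x a) = x.
Proof. by move=> <-; rewrite -cats1 take_size_cat. Qed.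

Lemma adj_take n w v :
  adj n.+1 w v -> take n w = take n v \/ adj n (take n w) (take n v).
Proof.
move=> wv; have [/rcons_of_size[x [a [ew x_n]]] /rcons_of_size[y [b [ev y_n]]]] := adj_size wv.
move: wv; rewrite ew ev !take_rcons_size // /adj /edge !etype_rcons // (eq_sym y).
case: (x =P y) => [->|_ wv]; [by left | right; move: wv].
by case/orP; [case: (etype n x y) | case: (etype n y x)] => //=; rewrite ?orbT.
Qed.

Lemma size_plen n p : is_path E ty I n p -> size p = (plen p).+1.
Proof. by case: p. Qed.

Lemma is_igs_irrefl : is_igs E ty I -> irreflexive E.
Proof. by case=> asym _ _ _ a; apply/negbTE/negP => Eaa; move/negP: (asym a a Eaa). Qed.

Definition radj n w v := (w == v) || adj n w v.

Lemma radj_take k n w v : k <= n -> radj n w v -> radj k (take k w) (take k v).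
Proof.
elim: n w v => [|n IHn] w v; first by rewrite leqn0 => /eqP-> _; rewrite !take0 /radj eqxx.
rewrite leq_eqVlt ltnS => /orP[/eqP-> | kn] /orP[/eqP-> | wv]; rewrite /radj ?eqxx //.
  by have [wn vn] := adj_size wv; rewrite !take_oversize ?wn ?vn // wv orbT.
rewrite -(take_takel w kn) -(take_takel v kn); apply: IHn => //.
by case: (adj_take wv) => [->|nwv]; rewrite /radj ?eqxx ?nwv ?orbT.
Qed.

Lemma radj_size n w v : size w = n -> radj n w v -> size v = n.
Proof. by move=> w_n /orP[/eqP<- // | /adj_size[]]. Qed.

Lemma radj_sym n w v : radj n w v = radj n v w.
Proof. by rewrite /radj eq_sym /adj [edge _ _ _ _ _ _ || _]orbC. Qed.

Lemma dist_le_radj_path n x p : size x = n -> path (radj n) x p ->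
  dist_le E ty I n x (last x p) (size p).
Proof.
elim: p x => [|y p IHp] x x_n /=; first by exists [::]; rewrite /is_path /= x_n eqxx.
case/andP=> xy /(IHp _ (radj_size x_n xy))[q [qp [<- qs]]].
case/orP: xy => [/eqP exy | xy].
  by subst y; exists q; split=> //; split=> //; apply: leqW.
exists (y :: q); split=> //; move: qp; rewrite /is_path /= x_n xy eqxx.
by case/andP=> -> ->.
Qed.

Lemma glue_step_adj n s s' : glue_step n s s' -> adj n s.1 s'.1.
Proof. by case/existsP=> -[t []] /andP[/eqP e _]; rewrite /adj /edge e ?orbT. Qed.

Lemma glue_step_of_adj n x y a b : size x = n -> size y = n -> x != y ->
  adj n.+1 (rcons x a) (rcons y b) -> glue_step n (x, a) (y, b).
Proof.
move=> x_n y_n /negbTE xy; rewrite /adj /edge !etype_rcons // (eq_sym y) xy.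
case/orP; [case e: (etype n x y) => [t|] | case e: (etype n y x) => [t|]] => //;
  case: ifP => // Iab _; apply/existsP; [exists (t, true) | exists (t, false)];
  by rewrite /port_edge /glue /= e eqxx Iab.
Qed.

Lemma glue_path_of_path N a0 u us :
  all (fun v => size v == N.+1) (u :: us) -> path (adj N.+1) u us ->
  path (fun v v' => v != v') (take N u) (map (take N) us) ->
  path (glue_step N) (take N u, last a0 u) [seq (take N v, last a0 v) | v <- us].
Proof.
elim: us u => [//|v us IHus] u /= /and3P[/eqP u_n /eqP v_n sizes] /andP[uv p] /andP[uv' p'].
rewrite (IHus v) /= ?v_n ?eqxx ?andbT //.
have [x [a [eu x_n]]] := rcons_of_size u_n; have [y [b [ev y_n]]] := rcons_of_size v_n.
move: uv uv'; rewrite eu ev !take_rcons_size // !last_rcons => uv uv'.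
exact: glue_step_of_adj x_n y_n uv' uv.
Qed.

Definition gates_meet_once P Q :=
  forall u v, gate P u -> gate P v -> gate Q u -> gate Q v -> u = v.

Lemma gates_meet_onceC P Q : gates_meet_once P Q -> gates_meet_once Q P.
Proof. by move=> PQ u v Qu Qv Pu Pv; apply: PQ. Qed.

Lemma flipK : involutive flip.
Proof. by case=> t []. Qed.

Definition side_port (b : bool) P := if b then flip P else P.

Lemma side_port_negb b P : side_port (~~ b) P = flip (side_port b P).
Proof. by case: b; rewrite /= ?flipK. Qed.

Lemma port_edge_side n b x P y : port_edge n x P y ->
  port_edge n (if b then y else x) (side_port b P) (if b then x else y).
Proof. by case: b; rewrite // -port_edge_flip. Qed.

(* Let [x] and [y] be joined in [G_n] through the port [P], recorded as [oP = Some P]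
   ([oP = None] and [y = x] while the walk has not yet left [x]).  The state
   [(b, j, c)] stands for the vertex [z j c] of [G_(n+2)], with [z = y] if [b] and
   [z = x] otherwise. *)
Definition cstate := (bool * S * S)%type.

Definition two_cell_step (oP : option port) (m m' : cstate) :=
  let: (b, j, c) := m in let: (b', k, d) := m' in
  if b == b' then cell_step j c k d
  else if oP is Some P then glue (side_port b P) j k && glue (side_port b P) c d else false.

Definition cell_state (x y : seq S) (m : cstate) :=
  (rcons (if m.1.1 then y else x) m.1.2, m.2).

Definition linked n oP x y := if oP is Some P then port_edge n x P y else y == x.

Definition two_cell_inv oP (m : cstate) :=
  (m.1.2 != m.2) &&
  if oP is Some P then gate (side_port m.1.1 P) m.1.2 && gate (side_port m.1.1 P) m.2
  else ~~ m.1.1.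

Definition refines (oP' oP : option port) := (oP == None) || (oP' == oP).

Section LocalConditions.

Hypothesis E_irrefl : irreflexive E.
Hypothesis glue_functional : forall P a b b', glue P a b -> glue P a b' -> b = b'.
Hypothesis cell_edge_functional :
  forall j P k k', cell_edge j P k -> cell_edge j P k' -> k = k'.
Hypothesis cell_edge_not_gate : forall j P k, cell_edge j P k -> ~~ gate P j.
Hypothesis cell_edges_meet_once : forall j P Q k k',
  cell_edge j P k -> cell_edge j Q k' -> P != Q -> gates_meet_once P Q.
Hypothesis cell_edge_gate_meet_once :
  forall j P Q k, cell_edge j P k -> gate Q j -> gates_meet_once P Q.
Hypothesis cell_step_diag : forall j c k, cell_step j c k k -> c = j.
Hypothesis cell_step_gate : forall R j c k d,
  cell_step j c k d -> j != c -> gate R j -> gate R c -> gate R k && gate R d.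
Hypothesis two_cell_shortcut :
  forall oP m, m.1.2 != m.2 -> shortcut_at (two_cell_step oP) m.

Lemma etype_refl n x : etype n x x = None.
Proof.
case: n => [//|n]; case e: (etype n.+1 x x) => [t|] //.
have [/rcons_of_size[z [a [ex z_n]]] _] := etype_size e.
by move: e; rewrite ex etype_rcons // eqxx E_irrefl.
Qed.

Lemma port_edge_neq n x P y : port_edge n x P y -> x != y.
Proof. by apply: contraTneq => ->; rewrite /port_edge etype_refl; case: ifP. Qed.

Lemma glue_pair_flip R j k c d : glue R j k -> glue R c d -> c != j ->
  [&& k != d, gate (flip R) k & gate (flip R) d].
Proof.
rewrite !(glue_flip R) => kj dc cj; rewrite (gate_glue kj) (gate_glue dc) !andbT.
by apply: contra cj => /eqP kd; rewrite kd in kj; rewrite (glue_functional dc kj).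
Qed.

Lemma port_edge_functional n x P y y' : port_edge n x P y -> port_edge n x P y' -> y = y'.
Proof.
elim: n x y y' => [|n IHn] X Y Y'; first by rewrite port_edge0.
move=> XY XY'; have [/rcons_of_size[x [j [eX x_n]]] /rcons_of_size[y [k [eY y_n]]]] :=
  port_edge_size XY.
have [_ /rcons_of_size[y' [k' [eY' y'_n]]]] := port_edge_size XY'; subst X Y Y'.
move: XY XY'; rewrite !port_edge_rcons //.
case: (x =P y) => [<-|_]; case: (x =P y') => [<-|_].
- by move=> jk jk'; rewrite (cell_edge_functional jk jk').
- by move=> /cell_edge_not_gate/negP nj /andP[_ /gate_glue/nj].
- by move=> /andP[_ /gate_glue jP] /cell_edge_not_gate/negP[].
- by case/andP=> xy jk /andP[xy' jk']; rewrite (IHn _ _ _ xy xy') (glue_functional jk jk').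
Qed.

Lemma port_edges_meet_once n x P Q y z :
  port_edge n x P y -> port_edge n x Q z -> P != Q -> gates_meet_once P Q.
Proof.
elim: n x y z => [|n IHn] X Y Z; first by rewrite port_edge0.
move=> XY XZ PQ; have [/rcons_of_size[x [j [eX x_n]]] /rcons_of_size[y [k [eY y_n]]]] :=
  port_edge_size XY.
have [_ /rcons_of_size[z [l [eZ z_n]]]] := port_edge_size XZ; subst X Y Z.
move: XY XZ; rewrite !port_edge_rcons //.
case: (x =P y) => _; case: (x =P z) => _.
- by move=> jk jl; apply: cell_edges_meet_once jk jl PQ.
- by move=> jk /andP[_ /gate_glue jQ]; apply: cell_edge_gate_meet_once jk jQ.
- by move=> /andP[_ /gate_glue jP] jl; apply/gates_meet_onceC/(cell_edge_gate_meet_once jl jP).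
- by move=> /andP[xy _] /andP[xz _]; apply: IHn xy xz PQ.
Qed.

Definition diag (s : seq S * S) := (rcons s.1 s.2, s.2).

Lemma glue_step_diag n s t :
  glue_step n.+1 (diag s) t -> exists2 s', t = diag s' & glue_step n s s'.
Proof.
case: s t => x j [Y d] st; have [/= /eqP] := glue_step_size st.
rewrite size_rcons eqSS => /eqP x_n /rcons_of_size[y [k [eY y_n]]].
move: st; rewrite eY /diag /= glue_step_rcons //; case: eqP => _.
  by case/existsP=> P /andP[/cell_edge_not_gate/negP nj /gate_glue/nj].
case/existsP=> P /and3P[xy jk jd]; exists (y, k); first by rewrite (glue_functional jd jk).
by apply/existsP; exists P; rewrite xy jk.
Qed.

Lemma glue_step_diag_homo n :
  {homo diag : s s' / glue_step n s s' >-> glue_step n.+1 s s'}.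
Proof.
move=> [x j] [y k] st; have [x_n y_n] := glue_step_size st.
rewrite /diag glue_step_rcons //; case/existsP: st => P /andP[/= xy jk].
by rewrite (negbTE (port_edge_neq xy)); apply/existsP; exists P; rewrite xy jk.
Qed.

Lemma two_cell_step_glue n oP x y : size x = n -> linked n oP x y ->
  {homo cell_state x y : m m' / two_cell_step oP m m' >-> glue_step n.+1 m m'}.
Proof.
move=> x_n xy [[b j] c] [[b' k] d]; rewrite /two_cell_step /cell_state /=.
have y_n : size y = n by case: oP xy => [P /port_edge_size[]|/eqP->].
case: (b =P b') => [<-|/eqP bb'] step.
  by rewrite glue_step_rcons ?eqxx //; case: (b).
case: oP xy step => [P xy|//] /andP[jk cd].
have side := port_edge_side b xy.
have -> : b' = ~~ b by move: bb'; case: (b); case: (b').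
rewrite glue_step_rcons ?if_neg ?(negbTE (port_edge_neq side)); try by case: (b).
by apply/existsP; exists (side_port b P); rewrite side jk cd.
Qed.

Lemma two_cell_lift n oP x y m t : size x = n -> linked n oP x y -> two_cell_inv oP m ->
  glue_step n.+1 (cell_state x y m) t ->
  exists oP' y' m', [/\ refines oP' oP, linked n oP' x y', cell_state x y' m' = t,
                      two_cell_step oP' m m' & two_cell_inv oP' m'].
Proof.
move=> x_n xy; case: m => [[b j] c] /andP[/= jc gates].
have y_n : size y = n by case: oP xy {gates} => [P /port_edge_size[]|/eqP->].
have z_n : size (if b then y else x) = n by case: (b).
case: t => Y d st; have [_ /= /rcons_of_size[w [k [eY w_n]]]] := glue_step_size st.
move: st; rewrite eY /cell_state /= glue_step_rcons //; case: eqP => [zw|_].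
  move=> jckd; exists oP, y, (b, k, d); rewrite /refines /= -zw eqxx orbT.
  have kd : k != d.
    by apply: contra jc => /eqP kd; rewrite kd in jckd; rewrite (cell_step_diag jckd).
  split=> //; first by rewrite /two_cell_step eqxx.
  rewrite /two_cell_inv /= kd /=.
  by case: oP {xy} gates => [P /andP[Rj Rc] | //]; apply: cell_step_gate jckd jc Rj Rc.
case/existsP=> Q /and3P[zQw jk cd]; have cj : c != j by rewrite eq_sym.
have /and3P[kd Qk Qd] := glue_pair_flip jk cd cj.
case: oP xy gates => [P xy /andP[Rj Rc] | _ bF].
- have zR := port_edge_side b xy; have RQ : side_port b P = Q.
    apply/eqP; apply: contraNT jc => RQ; apply/eqP.
    by apply: (port_edges_meet_once zR zQw RQ) Rj Rc (gate_glue jk) (gate_glue cd).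
  have ew : w = if b then x else y.
    by rewrite RQ in zR; apply: port_edge_functional zQw zR.
  exists (Some P), y, (~~ b, k, d); rewrite /refines eqxx orbT ew if_neg; split=> //.
    by rewrite /two_cell_step /= ifN_eq ?RQ ?jk ?cd //; case: (b).
  by rewrite /two_cell_inv /= kd side_port_negb RQ Qk Qd.
- rewrite (negbTE bF) in zQw *.
  by exists (Some Q), w, (true, k, d); rewrite /two_cell_step /two_cell_inv /= jk cd kd Qk Qd.
Qed.

Lemma refines_trans oP'' oP' oP : refines oP'' oP' -> refines oP' oP -> refines oP'' oP.
Proof.
by rewrite /refines => /orP[/eqP->|/eqP->] /orP[/eqP->|/eqP->]; rewrite ?eqxx ?orbT.
Qed.

Lemma two_cell_step_refines oP' oP m m' :
  refines oP' oP -> two_cell_step oP m m' -> two_cell_step oP' m m'.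
Proof. by case/orP=> /eqP-> //; case: m m' => [[b j] c] [[b' k] d] /=; case: ifP. Qed.

Lemma cell_state_refines n oP' oP x y' y m : refines oP' oP ->
  linked n oP' x y' -> linked n oP x y -> two_cell_inv oP m ->
  cell_state x y' m = cell_state x y m.
Proof.
case/orP=> [/eqP-> _ _ /andP[_ /negbTE bF] | /eqP-> xy' xy _]; first by rewrite /cell_state bF.
case: oP xy xy' => [P|] /=; last by move=> /eqP-> /eqP->.
by move=> xy xy'; rewrite (port_edge_functional xy' xy).
Qed.

Lemma two_cell_lift_path n x l : size x = n -> forall oP y m,
  linked n oP x y -> two_cell_inv oP m -> path (glue_step n.+1) (cell_state x y m) l ->
  exists oP' y' ml, [/\ refines oP' oP, linked n oP' x y', map (cell_state x y') ml = l
                      & path (two_cell_step oP') m ml].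
Proof.
move=> x_n; elim: l => [|t l IHl] oP y m xy inv /=.
  by exists oP, y, [::]; rewrite /refines eqxx orbT.
case/andP=> /(two_cell_lift x_n xy inv)[oP1 [y1 [m1 [r1 xy1 <- step1 inv1]]]].
case/(IHl _ _ _ xy1 inv1) => oP' [y' [ml [r' xy' eml pml]]].
exists oP', y', (m1 :: ml); split=> //; first exact: refines_trans r' r1.
  by rewrite /= eml (cell_state_refines r' xy' xy1 inv1).
by rewrite /= pml (two_cell_step_refines r' step1).
Qed.

Lemma glue_step_shortcut n s : shortcut_at (glue_step n) s.
Proof.
elim: n s => [|n IHn] s s1 s2 s3; first by case/existsP=> P; rewrite port_edge0.
case: s => X c st1 st2 st3.
have [/= /rcons_of_size[x [j [eX x_n]]] _] := glue_step_size st1; subst X.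
have [ecj | cj] := eqVneq c j.
  (* the walk stays on vertices [x j j] and descends to [G_(n+1)] *)
  subst c; have [t1 e1 st1'] := glue_step_diag (s := (x, j)) st1; subst s1.
  have [t2 e2 st2'] := glue_step_diag st2; subst s2.
  have [t3 e3 st3'] := glue_step_diag st3; subst s3.
  exact: within2_homo (glue_step_diag_homo (n := n)) (IHn (x, j) _ _ _ st1' st2' st3').
(* the walk stays in two [n]-cells *)
have inv0 : two_cell_inv None (false, j, c) by rewrite /two_cell_inv /= eq_sym cj.
have xx : linked n None x x := eqxx x.
have [] := two_cell_lift_path x_n xx inv0 (l := [:: s1; s2; s3]).
  by rewrite /= st1 st2 st3.
move=> oP [y [[|m1 [|m2 [|m3 [|? ?]]]] [_ xy //= [_ _ <-] /and4P[m01 m12 m23 _]]]].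
have jc : (false, j, c).1.2 != (false, j, c).2 by rewrite eq_sym.
have short := two_cell_shortcut (oP := oP) jc m01 m12 m23.
exact (within2_homo (two_cell_step_glue x_n xy) short).
Qed.

Lemma glue_walk_radj n s p :
  path (glue_step n) s p -> exists z, radj n s.1 z && radj n z (last s p).1.
Proof.
case/(within2_last (@glue_step_shortcut n)) => [<-|st|[t st st']]; rewrite /radj.
- by exists s.1; rewrite eqxx.
- by exists (last s p).1; rewrite eqxx (glue_step_adj st) orbT.
- by exists t.1; rewrite (glue_step_adj st) (glue_step_adj st') !orbT.
Qed.

Lemma nbhd_radj2 w v : in_nbhd E ty I w v ->
  exists z, radj (size w) w z && radj (size w) z v.
Proof.
case=> q [[w_pos [th [th_m th_path th_proj [L [N0 th_len]]]]] <-].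
set m := size w; pose N := maxn N0 m.
have mN : m <= N := leq_maxr N0 m.
have N_pos : 0 < N := leq_trans w_pos mN.
(* no vertex of [th N.+1] is deleted by the projection onto [G_N] *)
have lenN : plen (th N) = plen (th N.+1) by rewrite !th_len // ?leqW // leq_maxl.
have projN := th_proj N.+1 N N_pos (ltnSn N).
have projm := th_proj N.+1 m w_pos (leq_ltn_trans mN (ltnSn N)).
have := th_path N.+1 isT; have := size_plen (th_path N N_pos); move: lenN projN projm.
case: (th N.+1) => [|u us] lenN projN projm sizeN; first by [].
case/andP=> sizes p; have /andP[/eqP/rcons_of_size[x [a0 _]] _] := sizes.
have sorted_u : path (fun a b => a != b) (take N u) (map (take N) us).
  apply: (compress_sorted (s := map (take N) (u :: us))).
  by rewrite -[compress _]/(proj N (u :: us)) projN sizeN lenN size_map.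
have [z /andP[uz zv]] := glue_walk_radj (glue_path_of_path a0 sizes p sorted_u).
rewrite last_map /= in zv.
move: projm; rewrite th_m /proj map_cons.
have [s' -> ls'] := compress_cons (take m u) (map (take m) us).
case=> <- <-; exists (take m z).
by rewrite ls' last_map -(take_takel u mN) -(take_takel (last u us) mN) !(radj_take mN).
Qed.

Theorem bounded_geometry_of_local_conditions : bounded_geometry E ty I.
Proof.
exists 4 => w w_pos v1 v2 /nbhd_radj2[z1 /andP[wz1 z1v1]] /nbhd_radj2[z2 /andP[wz2 z2v2]].
have v1_w := radj_size (radj_size (erefl (size w)) wz1) z1v1.
apply: (dist_le_radj_path (p := [:: z1; w; z2; v2]) v1_w).
by rewrite /= radj_sym z1v1 radj_sym wz1 wz2 z2v2.
Qed.

End LocalConditions.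
End Gluing.

Lemma all_full (A : eqType) (s : seq A) (p : pred A) :
  (forall x, x \in s) -> all p s -> forall x, p x.
Proof. by move=> s_full /allP ps x; apply: ps. Qed.

Section Decision.
Variables (S T : finType) (E : rel S) (ty : S -> S -> T) (I : T -> rel S).
(* Explicit enumerations, so that the checks below can be decided by evaluation. *)
Variables (sS : seq S) (sT : seq T).
Hypotheses (sS_full : forall a, a \in sS) (sT_full : forall t, t \in sT).

Local Notation glue := (glue I).
Local Notation cell_edge := (cell_edge E ty).
Local Notation gate := (gate I).
Local Notation cell_step := (cell_step E ty I).

Definition ports : seq (port T) := [seq (t, b) | t <- sT, b <- [:: true; false]].

Definition cstates : seq (cstate S) :=
  [seq (bj, c) | bj <- [seq (b, j) | b <- [:: true; false], j <- sS], c <- sS].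

Lemma ports_full P : P \in ports.
Proof. by case: P => t b; apply: allpairs_f; case: b. Qed.

Lemma cstates_full m : m \in cstates.
Proof. by case: m => [[b j] c]; do 2!apply: allpairs_f => //; case: b. Qed.

Definition gateb P a := has (glue P a) sS.

Definition cell_stepb j c k d := has (fun P => cell_edge j P k && glue P c d) ports.

Definition two_cell_stepb oP (m m' : cstate S) :=
  let: (b, j, c) := m in let: (b', k, d) := m' in
  if b == b' then cell_stepb j c k d
  else if oP is Some P then glue (side_port b P) j k && glue (side_port b P) c d else false.

Lemma gatebE P a : gateb P a = gate P a.
Proof. by apply/hasP/existsP => [[b _ ab] | [b ab]]; exists b. Qed.

Lemma cell_stepbE j c k d : cell_stepb j c k d = cell_step j c k d.
Proof. by apply/hasP/existsP => [[P _ h] | [P h]]; exists P; rewrite ?ports_full. Qed.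

Lemma two_cell_stepbE oP : two_cell_stepb oP =2 two_cell_step E ty I oP.
Proof. by case=> [[b j] c] [[b' k] d]; rewrite /= cell_stepbE. Qed.

Definition gates_meet_onceb P Q := all (fun u => all (fun v =>
  [==> gateb P u, gateb P v, gateb Q u, gateb Q v => u == v]) sS) sS.

Lemma gates_meet_onceP P Q : gates_meet_onceb P Q -> gates_meet_once I P Q.
Proof.
move=> /(all_full sS_full) chk u v; rewrite -!gatebE => Pu Pv Qu Qv.
by apply/eqP; move: (all_full sS_full (chk u) v); rewrite Pu Pv Qu Qv.
Qed.

Definition bounded_geometry_checks := [&&
  all (fun P => all (fun a => all (fun b => all (fun b' =>
    [==> glue P a b, glue P a b' => b == b']) sS) sS) sS) ports,
  all (fun j => all (fun P => all (fun k => all (fun k' =>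
    [==> cell_edge j P k, cell_edge j P k' => k == k']) sS) sS) ports) sS,
  all (fun j => all (fun P => all (fun k =>
    cell_edge j P k ==> ~~ gateb P j) sS) ports) sS,
  all (fun j => all (fun P => all (fun Q => all (fun k => all (fun k' =>
    [==> cell_edge j P k, cell_edge j Q k', P != Q => gates_meet_onceb P Q]) sS) sS)
    ports) ports) sS,
  all (fun j => all (fun P => all (fun Q => all (fun k =>
    [==> cell_edge j P k, gateb Q j => gates_meet_onceb P Q]) sS) ports) ports) sS,
  all (fun j => all (fun c => all (fun k => cell_stepb j c k k ==> (c == j)) sS) sS) sS,
  all (fun R => all (fun j => all (fun c => all (fun k => all (fun d =>
    [==> cell_stepb j c k d, j != c, gateb R j, gateb R c => gateb R k && gateb R d])
    sS) sS) sS) sS) ports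
  & all (fun oP => all (fun m =>
      (m.1.2 != m.2) ==> shortcut_atb (two_cell_stepb oP) cstates m) cstates)
    (None :: map Some ports)].

Lemma opt_ports_full oP : oP \in None :: map Some ports.
Proof. by case: oP => [P|] //; rewrite inE map_f ?orbT ?ports_full. Qed.

Local Notation allS := (all_full sS_full).
Local Notation allPorts := (all_full ports_full).

Theorem bounded_geometry_of_checks :
  is_igs E ty I -> bounded_geometry_checks -> bounded_geometry E ty I.
Proof.
move=> /is_igs_irrefl irr.
case/and5P=> glue_fun edge_fun no_gate edges_once /and4P[edge_gate_once diag gates short].
apply: bounded_geometry_of_local_conditions => //.
- move=> P a b b' ab ab'; apply/eqP.
  by move: glue_fun => /allPorts/(_ P)/allS/(_ a)/allS/(_ b)/allS/(_ b'); rewrite ab ab'.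
- move=> j P k k' jk jk'; apply/eqP.
  by move: edge_fun => /allS/(_ j)/allPorts/(_ P)/allS/(_ k)/allS/(_ k'); rewrite jk jk'.
- move=> j P k jk; rewrite -gatebE.
  by move: no_gate => /allS/(_ j)/allPorts/(_ P)/allS/(_ k); rewrite jk.
- move=> j P Q k k' jk jk' PQ; apply: gates_meet_onceP.
  move: edges_once => /allS/(_ j)/allPorts/(_ P)/allPorts/(_ Q)/allS/(_ k)/allS/(_ k').
  by rewrite jk jk' PQ.
- move=> j P Q k jk Qj; apply: gates_meet_onceP.
  move: edge_gate_once => /allS/(_ j)/allPorts/(_ P)/allPorts/(_ Q)/allS/(_ k).
  by rewrite jk gatebE Qj.
- move=> j c k; rewrite -cell_stepbE => jckk; apply/eqP.
  by move: diag => /allS/(_ j)/allS/(_ c)/allS/(_ k); rewrite jckk.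
- move=> R j c k d; rewrite -cell_stepbE -!gatebE => jckd jc Rj Rc.
  move: gates => /allPorts/(_ R)/allS/(_ j)/allS/(_ c)/allS/(_ k)/allS/(_ d).
  by rewrite jckd jc Rj Rc.
- move=> oP m jc; apply: (eq_shortcut_at (two_cell_stepbE oP)).
  apply: (shortcut_atP cstates_full).
  by move: short => /(all_full opt_ports_full)/(_ oP)/(all_full cstates_full)/(_ m); rewrite jc.
Qed.

Local Notation undirected := (fun a b => E a b || E b a).

Definition is_igs_checks z := [&&
  all (fun a => all (fun b => E a b ==> ~~ E b a) sS) sS,
  all (fun a => [|| a == z, undirected a z
                  | has (fun b => undirected a b && undirected b z) sS]) sS,
  all (fun t => has (fun a => has (fun b => E a b && (ty a b == t)) sS) sS) sT
  & all (fun t => has (fun a => has (I t a) sS) sS) sT].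

Lemma is_igs_of_checks z : is_igs_checks z -> is_igs E ty I.
Proof.
case/and4P=> asym near typed glued; split.
- by move=> a b ab; move: asym => /allS/(_ a)/allS/(_ b); rewrite ab.
- have to_z a : connect undirected a z.
    case/or3P: (allS near a) => [/eqP-> | az | /hasP[b _ /andP[ab bz]]].
    - exact: connect0.
    - exact: connect1.
    - by apply: (connect_trans (y := b)); apply: connect1.
  move=> a b; apply: connect_trans (to_z a) _.
  by rewrite (sym_connect_sym (fun a b => orbC _ _)) to_z.
- by move=> t; case/hasP: (all_full sT_full typed t) => a _ /hasP[b _ ab]; exists a, b.
- by move=> t; case/hasP: (all_full sT_full glued t) => a _ /hasP[b _ ab]; exists a, b.
Qed.

End Decision.

(* [insub_eq] rather than [insub], whose proof of [i < n] blocks evaluation. *)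
Definition ords n : seq 'I_n := pmap (insub_eq 'I_n) (iota 0 n).

Lemma mem_ords n (i : 'I_n) : i \in ords n.
Proof. by rewrite /ords (eq_pmap (insub_eqE _)) mem_ord_enum. Qed.

Lemma gasket_is_igs : is_igs gasketE gasketTy gasketI.
Proof. by apply: (is_igs_of_checks (@mem_ords 3) (@mem_ords 3) (z := ord0)); vm_compute. Qed.

Lemma gasket_bounded_geometry : bounded_geometry gasketE gasketTy gasketI.
Proof.
by apply: (bounded_geometry_of_checks (@mem_ords 3) (@mem_ords 3) gasket_is_igs); vm_compute.
Qed.

Lemma carpet_is_igs : is_igs carpetE carpetTy carpetI.
Proof. by apply: (is_igs_of_checks (@mem_ords 5) (@mem_ords 5) (z := ord0)); vm_compute. Qed.

Lemma carpet_bounded_geometry : bounded_geometry carpetE carpetTy carpetI.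
Proof.
by apply: (bounded_geometry_of_checks (@mem_ords 5) (@mem_ords 5) carpet_is_igs); vm_compute.
Qed.

Theorem proposition5p9 :
  (is_igs gasketE gasketTy gasketI /\ bounded_geometry gasketE gasketTy gasketI) /\
  (is_igs carpetE carpetTy carpetI /\ bounded_geometry carpetE carpetTy carpetI).
Proof.
split; split;
  [exact: gasket_is_igs | exact: gasket_bounded_geometry
  | exact: carpet_is_igs | exact: carpet_bounded_geometry].
Qed.
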